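(* Let $G$ be a finite group, $S\le G$, $B$ a simple $S$-Galois algebra over a field $k$, and $A=\mathrm{Ind}_S^G(B)$. Then $|\mathrm{Aut}_G(A)|=|G|$ if and only if (1) $|\mathrm{Aut}_S(B)|=|S|$, (2) $S$ is a normal subgroup of $G$, and (3) for all $g\in G$, $B^{(g)}\cong B$ as $S$-algebras.
   Context: An $S$-algebra is a $k$-algebra with $S$ acting by algebra automorphisms; $\mathrm{Aut}_S(B)$ = $S$-equivariant algebra automorphisms. A simple $S$-Galois algebra is an $S$-algebra $B$, simple as an algebra, with $B^S=k$ and $B\otimes_kB\to\prod_{s\in S}B$, $x\otimes y\mapsto(x(s\cdot y))_s$, bijective. $\mathrm{Ind}_S^G(B)=\{r:G\to B\mid r(sg)=s\cdot r(g)\}$ with pointwise operations and $(g\cdot r)(x)=r(xg)$. For $g\in G$, $B^{(g)}$ is $B$ with the $g^{-1}Sg$-action $h\cdot_g b=(ghg^{-1})\cdot b$ (an $S$-algebra when $S$ is normal). *)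

From HB Require Import structures.
From mathcomp Require Import all_boot all_algebra all_fingroup.
From mathcomp Require Import falgebra.
Set Implicit Arguments. Unset Strict Implicit. Unset Printing Implicit Defensive.
Import GRing.Theory.
Local Open Scope ring_scope.

Definition has_card_mod (T : Type) (P : T -> Prop) (eqv : T -> T -> Prop)
    (n : nat) : Prop :=
  exists f : 'I_n -> T,
    [/\ forall i, P (f i),
        forall i j, eqv (f i) (f j) -> i = j &
        forall x, P x -> exists i, eqv (f i) x].

Section Defs.
Variables (k : fieldType) (gT : finGroupType) (B : falgType k).

Definition alg_aut (f : B -> B) : Prop :=
  [/\ forall (c : k) (x y : B), f (c *: x + y) = c *: f x + f y,
      f 1 = 1,
      forall x y : B, f (x * y) = f x * f y &
      bijective f].

(* S acts on B by algebra automorphisms (act is only relevant on S) *)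
Definition is_S_algebra (S : {set gT}) (act : gT -> B -> B) : Prop :=
  [/\ forall s, s \in S -> alg_aut (act s),
      act 1%g =1 id &
      forall s t, s \in S -> t \in S -> act (s * t)%g =1 act s \o act t].

Definition two_sided_ideal (I : B -> Prop) : Prop :=
  [/\ I 0,
      forall x y, I x -> I y -> I (x + y) &
      forall a x, I x -> I (a * x) /\ I (x * a)].

Definition simple_algebra : Prop :=
  (1 != 0 :> B) /\
  forall I, two_sided_ideal I -> (forall x, I x -> x = 0) \/ (forall x, I x).

Definition invariants_trivial (S : {set gT}) (act : gT -> B -> B) : Prop :=
  forall b : B, (forall s, s \in S -> act s b = b) <-> exists c : k, b = c%:A.

(* The Galois map B (x)_k B -> prod_{s in S} B, x (x) y |-> (x (s . y))_s.
   B (x)_k B is modelled by coefficient matrices c w.r.t. the basis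
   (e_i (x) e_j) where e = vbasis {:B}. *)
Definition galois_map (act : gT -> B -> B) (c : 'M[k]_(\dim {:B})) (s : gT) : B :=
  \sum_(i < \dim {:B}) \sum_(j < \dim {:B})
     c i j *: (tnth (vbasis {:B}) i * act s (tnth (vbasis {:B}) j)).

Definition galois_bijective (S : {set gT}) (act : gT -> B -> B) : Prop :=
  forall f : gT -> B,
    exists! c : 'M[k]_(\dim {:B}), forall s, s \in S -> galois_map act c s = f s.

Definition simple_S_Galois (S : {set gT}) (act : gT -> B -> B) : Prop :=
  [/\ is_S_algebra S act, simple_algebra, invariants_trivial S act &
      galois_bijective S act].

Definition S_aut (S : {set gT}) (act : gT -> B -> B) (f : B -> B) : Prop :=
  alg_aut f /\ forall s b, s \in S -> f (act s b) = act s (f b).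

(* B^(g) ~= B as S-algebras (S normal): phi ((g h g^-1) . b) = h . phi b *)
Definition conj_iso (S : {set gT}) (act : gT -> B -> B) (g : gT) : Prop :=
  exists phi : B -> B, alg_aut phi /\
    forall h b, h \in S -> phi (act (g * h * g^-1)%g b) = act h (phi b).

(* Elements: functions r : G -> B with r(sg) = s . r(g); represented as
   finite functions on gT vanishing outside G. *)
Definition in_Ind (G S : {set gT}) (act : gT -> B -> B) (r : {ffun gT -> B}) : Prop :=
  (forall x, x \notin G -> r x = 0) /\
  (forall s g, s \in S -> g \in G -> r (s * g)%g = act s (r g)).

Definition ind_add (r1 r2 : {ffun gT -> B}) : {ffun gT -> B} := [ffun x => r1 x + r2 x].
Definition ind_scale (c : k) (r : {ffun gT -> B}) : {ffun gT -> B} := [ffun x => c *: r x].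
Definition ind_mul (r1 r2 : {ffun gT -> B}) : {ffun gT -> B} := [ffun x => r1 x * r2 x].
Definition ind_one (G : {set gT}) : {ffun gT -> B} :=
  [ffun x => if x \in G then 1 else 0].
Definition ind_act (g : gT) (r : {ffun gT -> B}) : {ffun gT -> B} := [ffun x => r (x * g)%g].

(* G-equivariant k-algebra automorphisms of Ind_S^G(B), as maps on the
   ambient function space; two are identified when they agree on Ind. *)
Definition Ind_aut (G S : {set gT}) (act : gT -> B -> B)
    (phi : {ffun gT -> B} -> {ffun gT -> B}) : Prop :=
  let A := in_Ind G S act in
  (forall r, A r -> A (phi r)) /\
  (forall c r1 r2, A r1 -> A r2 ->
     phi (ind_add (ind_scale c r1) r2) = ind_add (ind_scale c (phi r1)) (phi r2)) /\
  (forall r1 r2, A r1 -> A r2 -> phi (ind_mul r1 r2) = ind_mul (phi r1) (phi r2)) /\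
  phi (ind_one G) = ind_one G /\
  (forall r1 r2, A r1 -> A r2 -> phi r1 = phi r2 -> r1 = r2) /\
  (forall r', A r' -> exists r, A r /\ phi r = r') /\
  (forall g r, g \in G -> A r -> phi (ind_act g r) = ind_act g (phi r)).

Definition Ind_eqv (G S : {set gT}) (act : gT -> B -> B)
    (phi psi : {ffun gT -> B} -> {ffun gT -> B}) : Prop :=
  forall r, in_Ind G S act r -> phi r = psi r.

End Defs.

(* Let e = ind_emb 1 be the central idempotent of A = Ind_S^G(B) supported on S.
   Since B is simple, a G-automorphism phi of A sends e to the indicator of a
   single coset S n with n in N_G(S), and phi is then the automorphism induced
   by n and an S-algebra isomorphism psi : B -> B^(n).  Dedekind independence of
   distinct S-automorphisms, together with the Galois condition, gives
   |Aut_S(B)| <= |S|, so each fiber of phi |-> S n has at most |S| elements and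
   |Aut_G(A)| <= |N_G(S) : S| |S| <= |G|.  Equality forces N_G(S) = G, full
   fibers (|Aut_S(B)| = |S|) and every coset to occur (B^(g) ~ B); conversely
   these conditions let one enumerate Aut_G(A) by g = s n in G. *)

From HB Require Import structures.
From mathcomp Require Import all_boot all_algebra all_fingroup.
From mathcomp Require Import falgebra zify.
From Stdlib Require Import ClassicalEpsilon.
Set Implicit Arguments.
Unset Strict Implicit.
Import GRing.Theory.
Local Open Scope group_scope.
Local Open Scope ring_scope.

Section AlgAut.
Context {k : fieldType} {B : falgType k}.

Lemma alg_autL {f : B -> B} : alg_aut f ->
  forall c x y, f (c *: x + y) = c *: f x + f y.
Proof. by case. Qed.

Lemma alg_aut0 {f : B -> B} : alg_aut f -> f 0 = 0.
Proof.
move=> /alg_autL lin; have := lin 1 0 0; rewrite scaler0 scale1r addr0 => f0.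
by apply: (addrI (f 0)); rewrite addr0 -f0.
Qed.

Lemma alg_autD {f : B -> B} : alg_aut f -> forall x y, f (x + y) = f x + f y.
Proof. by move=> fA x y; have := alg_autL fA 1 x y; rewrite !scale1r. Qed.

Lemma alg_autZ {f : B -> B} : alg_aut f -> forall c x, f (c *: x) = c *: f x.
Proof. by move=> fA c x; rewrite -[c *: x]addr0 (alg_autL fA) (alg_aut0 fA) addr0. Qed.

Lemma alg_autM {f : B -> B} : alg_aut f -> forall x y, f (x * y) = f x * f y.
Proof. by case. Qed.

Lemma alg_aut1 {f : B -> B} : alg_aut f -> f 1 = 1.
Proof. by case. Qed.

Lemma alg_aut_sum {f : B -> B} : alg_aut f ->
  forall (I : Type) (r : seq I) (P : pred I) (F : I -> B),
  f (\sum_(i <- r | P i) F i) = \sum_(i <- r | P i) f (F i).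
Proof.
move=> fA I r P F; elim/big_rec2: _ => [|i y1 y2 _ <-]; first exact: alg_aut0.
by rewrite alg_autD.
Qed.

Lemma alg_aut_inj {f : B -> B} : alg_aut f -> injective f.
Proof. by case=> _ _ _ /bij_inj. Qed.

Lemma alg_aut_comp {f g : B -> B} : alg_aut f -> alg_aut g -> alg_aut (f \o g).
Proof.
move=> fA gA; split=> [c x y|||] /=.
- by rewrite (alg_autL gA) (alg_autL fA).
- by rewrite !alg_aut1.
- by move=> x y; rewrite !alg_autM.
by apply: bij_comp; [case: fA | case: gA].
Qed.

Lemma alg_aut_can {f g : B -> B} : alg_aut f -> cancel f g -> cancel g f -> alg_aut g.
Proof.
move=> fA fK gK; split=> [c x y|||].
- by apply: (alg_aut_inj fA); rewrite gK (alg_autL fA) !gK.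
- by apply: (alg_aut_inj fA); rewrite gK alg_aut1.
- by move=> x y; apply: (alg_aut_inj fA); rewrite gK alg_autM // !gK.
by exists f.
Qed.

Lemma simple_oner_neq0 : simple_algebra B -> (1 : B) != 0.
Proof. by case. Qed.

Lemma simple_central_idem : simple_algebra B -> forall c : B,
  (forall b, c * b = b * c) -> c * c = c -> c = 0 \/ c = 1.
Proof.
move=> [_ simpleB] c cC cc; case: (simpleB (fun z => exists y, z = c * y)).
- split; first by exists 0; rewrite mulr0.
    by move=> x y [x' ->] [y' ->]; exists (x' + y'); rewrite mulrDr.
  move=> a x [y ->]; split; first by exists (a * y); rewrite mulrA -cC mulrA.
  by exists (y * a); rewrite mulrA.
- by move=> cB0; left; apply: cB0; exists 1; rewrite mulr1.
move=> cBT; right; case: (cBT 1) => y Hy.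
by rewrite -[c]mulr1 Hy mulrA cc -Hy.
Qed.

End AlgAut.

Lemma leq_dimv_injective (k : fieldType) (U V : vectType k) (f : U -> V) :
  (forall c x y, f (c *: x + y) = c *: f x + f y) -> injective f ->
  (dim U <= dim V)%N.
Proof.
move=> lin finj.
have f0 : f 0 = 0.
  have := lin 1 0 0; rewrite scaler0 scale1r addr0 => f0.
  by apply: (addrI (f 0)); rewrite addr0 -f0.
have fsum (I : finType) (c : I -> k) (x : I -> U) :
    f (\sum_i c i *: x i) = \sum_i c i *: f (x i).
  by elim/big_rec2: _ => [|i y1 y2 _ <-] //; rewrite lin.
set X := vbasis (fullv : {vspace U}).
have freeX : free X := basis_free (vbasisP _).
have freeY : free (map_tuple f X).
  apply/freeP => c Hc i; move/freeP: freeX; apply => //.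
  apply: finj; rewrite f0 -Hc fsum; apply: eq_bigr => j _.
  by rewrite (nth_map 0) // size_tuple.
by have := dimvS (subvf <<map_tuple f X>>%VS); rewrite (eqP freeY) size_tuple !dimvf.
Qed.

Lemma dim_ffun (k : fieldType) (I : finType) (V : vectType k) :
  dim {ffun I -> V} = (#|I| * dim V)%N.
Proof. by []. Qed.

Lemma injective_surjective_bij (T : choiceType) (f : T -> T) :
  injective f -> (forall y, exists x, f x = y) -> bijective f.
Proof.
move=> finj fsurj.
have ex y : exists x, f x == y by case: (fsurj y) => x <-; exists x.
exists (fun y => xchoose (ex y)) => [x|y]; last exact/eqP/(xchooseP (ex y)).
by apply: finj; apply/eqP/(xchooseP (ex (f x))).
Qed.

Lemma sum_leq_const_eq (T : finType) (V : {set T}) (c : T -> nat) (M : nat) :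
  (forall v, v \in V -> c v <= M)%N -> (\sum_(v in V) c v = #|V| * M)%N ->
  forall v, v \in V -> c v = M.
Proof.
move=> c_le c_sum v vV; apply/eqP; rewrite eqn_leq c_le //=.
move: c_sum; rewrite -sum_nat_const !(bigD1 v vV) /=.
match goal with |- ((_ + ?X)%N = (_ + ?Y)%N -> _) =>
  have : (X <= Y)%N by apply: leq_sum => i /andP[iV _]; apply: c_le end.
lia.
Qed.

Lemma mem_conjg_norm (gT : finGroupType) (S : {group gT}) n s :
  n \in 'N(S) -> s \in S -> (n^-1 * s * n)%g \in S.
Proof. by move=> nN sS; rewrite -mulgA -conjgE memJ_norm. Qed.

Lemma mem_conjgV_norm (gT : finGroupType) (S : {group gT}) n s :
  n \in 'N(S) -> s \in S -> (n * s * n^-1)%g \in S.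
Proof. by move=> nN sS; rewrite -{1}(invgK n) mem_conjg_norm ?groupV. Qed.

Section SAlgebra.
Variables (k : fieldType) (gT : finGroupType) (S : {group gT}) (B : falgType k)
  (act : gT -> B -> B).
Hypothesis actS : is_S_algebra S act.

Lemma act_alg_aut {s} : s \in S -> alg_aut (act s).
Proof. by case: actS => H _ _; apply: H. Qed.

Lemma act1 b : act 1%g b = b.
Proof. by case: actS => _ H _; apply: H. Qed.

Lemma actM s t b : s \in S -> t \in S -> act (s * t)%g b = act s (act t b).
Proof. by case: actS => _ _ H sS tS; apply: H. Qed.

Lemma act0 s : s \in S -> act s 0 = 0.
Proof. by move=> sS; rewrite (alg_aut0 (act_alg_aut sS)). Qed.

Lemma act_oner s : s \in S -> act s 1 = 1.
Proof. by move=> sS; apply: alg_aut1 (act_alg_aut sS). Qed.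

Section Dedekind.
Hypotheses (simpleB : simple_algebra B) (invS : invariants_trivial S act).
Variables (m : nat) (f : 'I_m -> B -> B).
Hypotheses (fS : forall i, S_aut S act (f i)) (f_inj : forall i j, f i =1 f j -> i = j).

Let fA i : alg_aut (f i). Proof. by case: (fS i). Qed.
Let f_act i s b : s \in S -> f i (act s b) = act s (f i b).
Proof. by case: (fS i) => _; apply. Qed.

Definition S_aut_relation (a : 'I_m -> B) := forall y, \sum_i f i y * a i = 0.

Lemma S_aut_relation0 : S_aut_relation (fun _ => 0).
Proof. by move=> y; rewrite big1 // => i _; rewrite mulr0. Qed.

Lemma S_aut_relationB a1 a2 : S_aut_relation a1 -> S_aut_relation a2 ->
  S_aut_relation (fun i => a1 i - a2 i).
Proof.
by move=> r1 r2 y; rewrite (eq_bigr _ (fun i _ => mulrBr _ _ _)) sumrB r1 r2 subrr.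
Qed.

Lemma S_aut_relationD a1 a2 : S_aut_relation a1 -> S_aut_relation a2 ->
  S_aut_relation (fun i => a1 i + a2 i).
Proof.
by move=> r1 r2 y; rewrite (eq_bigr _ (fun i _ => mulrDr _ _ _)) big_split /= r1 r2 addr0.
Qed.

Lemma S_aut_relation_mulr a b : S_aut_relation a -> S_aut_relation (fun i => a i * b).
Proof.
move=> ra y; rewrite (eq_bigr (fun i => f i y * a i * b)) => [|i _]; last exact: mulrA.
by rewrite -mulr_suml ra mul0r.
Qed.

Lemma S_aut_relation_mull a b : S_aut_relation a ->
  S_aut_relation (fun i => f i b * a i).
Proof.
move=> ra y; rewrite -[RHS](ra (y * b)); apply: eq_bigr => i _.
by rewrite (alg_autM (fA i)) mulrA.
Qed.

Lemma S_aut_relation_comm a i0 z : S_aut_relation a ->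
  S_aut_relation (fun i => f i z * a i - a i * f i0 z).
Proof.
move=> ra y; rewrite (eq_bigr (fun i => f i (y * z) * a i - (f i y * a i) * f i0 z)).
  by rewrite sumrB -mulr_suml !ra mul0r subr0.
by move=> j _; rewrite mulrBr (alg_autM (fA j)) !mulrA.
Qed.

Lemma S_aut_relation_act a t : t \in S -> S_aut_relation a ->
  S_aut_relation (fun i => act t (a i)).
Proof.
move=> tS ra y; have tA := act_alg_aut tS.
have := congr1 (act t) (ra (act t^-1%g y)); rewrite (alg_aut0 tA) (alg_aut_sum tA) => sum0.
rewrite -[RHS]sum0.
by apply: eq_bigr => i _; rewrite (alg_autM tA) f_act ?groupV // -actM ?groupV // mulgV act1.
Qed.

Lemma S_aut_relation_ideal (a : 'I_m -> B) i0 : two_sided_ideal (fun x => exists a',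
  [/\ S_aut_relation a', forall i, a i = 0 -> a' i = 0 & a' i0 = x]).
Proof.
split.
- by exists (fun _ => 0 : B); split=> //; apply: S_aut_relation0.
- move=> x y [a1 [r1 s1 <-]] [a2 [r2 s2 <-]].
  exists (fun i => a1 i + a2 i); split=> //; first exact: S_aut_relationD.
  by move=> i ai; rewrite s1 ?s2 ?addr0.
move=> b x [a1 [r1 s1 <-]]; split.
  case: (fA i0) => _ _ _ [g fK gK].
  exists (fun i => f i (g b) * a1 i); split; first exact: S_aut_relation_mull.
    by move=> i ai; rewrite s1 // mulr0.
  by rewrite gK.
exists (fun i => a1 i * b); split=> //; first exact: S_aut_relation_mulr.
by move=> i ai; rewrite s1 // mul0r.
Qed.

(* A relation with a i0 = 1 that is minimal among relations supported in its
   support forces all its coefficients to be S-invariant, hence scalars, and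
   the other f i to coincide with f i0. *)
Lemma S_aut_minimal_relation_absurd a i0 :
  S_aut_relation a -> a i0 = 1 ->
  (forall c, S_aut_relation c -> (forall i, a i = 0 -> c i = 0) ->
     c i0 = 0 -> forall i, c i = 0) ->
  False.
Proof.
move=> ra a1 amin.
have a_comm i z : f i z * a i = a i * f i0 z.
  apply/eqP; rewrite -subr_eq0; apply/eqP.
  apply: (amin (fun i => f i z * a i - a i * f i0 z)).
  - exact: S_aut_relation_comm.
  - by move=> j ->; rewrite mulr0 mul0r subr0.
  by rewrite a1 mulr1 mul1r subrr.
have a_inv i t : t \in S -> act t (a i) = a i.
  move=> tS; apply/eqP; rewrite -subr_eq0; apply/eqP.
  apply: (amin (fun i => act t (a i) - a i)).
  - by apply: S_aut_relationB => //; apply: S_aut_relation_act.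
  - by move=> j ->; rewrite act0 // subr0.
  by rewrite a1 act_oner // subrr.
have a_off i : i != i0 -> a i = 0.
  move=> ni; have [c ac] : exists c : k, a i = c%:A by apply/invS => s; apply: a_inv.
  rewrite ac; apply/eqP; rewrite scaler_eq0 oner_eq0 orbF.
  apply/negP => /negPn cnz; move/eqP: ni; apply; apply: f_inj => z.
  by have := a_comm i z; rewrite ac mulr_algr mulr_algl => /(scalerI cnz).
have := ra 1; rewrite (bigD1 i0) //= big1 => [|i ni]; last by rewrite a_off // mulr0.
by rewrite (alg_aut1 (fA i0)) a1 mulr1 addr0 => /eqP; rewrite (negbTE (simple_oner_neq0 simpleB)).
Qed.

Lemma S_aut_relation_eq0 a : S_aut_relation a -> forall i, a i = 0.
Proof.
pose supp (a : 'I_m -> B) := [set i | a i != 0].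
suff: forall N a, (#|supp a| <= N)%N -> S_aut_relation a -> forall i, a i = 0.
  by move=> H ra; apply: (H _ a (leqnn _)).
elim=> [|N IH] {}a.
  by rewrite leqn0 cards_eq0 => /eqP a0 _ i; have := in_set0 i; rewrite -a0 inE => /negbFE/eqP.
move=> supp_le ra i0; apply/eqP/negPn/negP => a0.
have [_ /(_ _ (S_aut_relation_ideal a i0))] := simpleB.
case=> [ideal0 | /(_ 1) [a' [ra' sa' a'1]]].
  by move: a0; rewrite (ideal0 (a i0)) ?eqxx //; exists a.
apply: (S_aut_minimal_relation_absurd ra' a'1) => c rc c_supp c0.
apply: (IH c) => //; rewrite -ltnS; apply: leq_trans supp_le.
have i0a : i0 \in supp a by rewrite inE a0.
rewrite (cardsD1 i0 (supp a)) i0a add1n ltnS; apply: subset_leq_card; apply/subsetP=> i.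
rewrite !inE => ci; apply/andP; split; first by apply: contraNneq ci => ->; rewrite c0.
by apply: contraNneq ci => ai; rewrite c_supp ?sa'.
Qed.

(* Dedekind independence makes a |-> (sum_i f i e_j * a i)_j injective, e a basis. *)
Lemma S_aut_family_dim_bound : (m * \dim {:B} <= \dim {:B} * \dim {:B})%N.
Proof.
set d := \dim {:B}.
set e := vbasis (fullv : {vspace B}).
pose L (a : {ffun 'I_m -> B}) : {ffun 'I_d -> B} := [ffun j : 'I_d => \sum_i f i e`_j * a i].
have := @leq_dimv_injective k _ _ L.
rewrite !dim_ffun !card_ord -dimvf; apply.
  move=> c x y; apply/ffunP=> j; rewrite !ffunE.
  rewrite scaler_sumr -big_split; apply: eq_bigr => i _.
  by rewrite !ffunE mulrDr -scalerAr.
move=> a b Lab; apply/ffunP => i; apply/eqP; rewrite -subr_eq0; apply/eqP.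
move: i; apply: (@S_aut_relation_eq0 (fun i => a i - b i)) => y.
have f_coord i : f i y = \sum_(j < d) coord e j y *: f i e`_j.
  rewrite {1}(coord_vbasis (memvf y)) (alg_aut_sum (fA i)).
  by apply: eq_bigr => j _; rewrite (alg_autZ (fA i)).
rewrite (eq_bigr (fun i => \sum_(j < d) coord e j y *: (f i e`_j * (a i - b i)))).
  rewrite exchange_big /= big1 // => j _.
  have := congr1 (fun F : {ffun 'I_d -> B} => F j) Lab; rewrite /L !ffunE => Lab_j.
  by rewrite -scaler_sumr (eq_bigr _ (fun i _ => mulrBr _ _ _)) sumrB Lab_j subrr scaler0.
by move=> i _; rewrite f_coord mulr_suml; apply: eq_bigr => j _; rewrite scalerAl.
Qed.

End Dedekind.

Lemma dimvf_gt0 : simple_algebra B -> (0 < \dim {:B})%N.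
Proof.
move=> simpleB; rewrite lt0n dimv_eq0; apply: contraNneq (simple_oner_neq0 simpleB).
by move=> fullB0; rewrite -memv0 -fullB0 memvf.
Qed.

Lemma galois_dim_bound : galois_bijective S act ->
  (\dim {:B} * \dim {:B} <= #|S| * \dim {:B})%N.
Proof.
move=> galS; set d := \dim {:B}.
pose M (c : 'M[k]_d) : {ffun 'I_#|S| -> B} := [ffun j => galois_map act c (enum_val j)].
have := @leq_dimv_injective k _ _ M.
rewrite dim_matrix dim_ffun card_ord -dimvf; apply.
  move=> c x y; apply/ffunP=> j; rewrite !ffunE /galois_map.
  rewrite scaler_sumr -big_split; apply: eq_bigr => i _.
  rewrite scaler_sumr -big_split; apply: eq_bigr => l _.
  by rewrite !mxE scalerDl scalerA.
move=> x y Mxy; case: (galS (galois_map act x)) => c [_ c_uniq].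
rewrite -(c_uniq x) //; apply: c_uniq => s sS.
have := congr1 (fun F : {ffun 'I_#|S| -> B} => F (enum_rank_in sS s)) Mxy.
by rewrite /= !ffunE enum_rankK_in.
Qed.

Lemma S_aut_family_card_le :
  simple_algebra B -> invariants_trivial S act -> galois_bijective S act ->
  forall m (f : 'I_m -> B -> B), (forall i, S_aut S act (f i)) ->
  (forall i j, f i =1 f j -> i = j) -> (m <= #|S|)%N.
Proof.
move=> simpleB invS galS m f fS f_inj.
have d_gt0 := dimvf_gt0 simpleB.
rewrite -(leq_pmul2r d_gt0); apply: leq_trans (galois_dim_bound galS).
exact: S_aut_family_dim_bound.
Qed.

Section Induced.
Variable G : {group gT}.
Hypotheses (sSG : S \subset G) (simpleB : simple_algebra B).

Local Notation A := (in_Ind G S act).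

Definition ind_emb (b : B) : {ffun gT -> B} := [ffun x => if x \in S then act x b else 0].

Definition ind_zero : {ffun gT -> B} := [ffun _ => 0].

Lemma mem_subG {x} : x \in S -> x \in G.
Proof. exact: (subsetP sSG). Qed.

Lemma ind_emb_in b : A (ind_emb b).
Proof.
split=> [x xG|s g sS gG]; rewrite !ffunE.
  by case: ifP => // /mem_subG; rewrite (negbTE xG).
by rewrite groupMl //; case: ifP => gS; rewrite ?actM ?act0.
Qed.

Lemma ind_act_in {g r} : g \in G -> A r -> A (ind_act g r).
Proof.
move=> gG [r0 rM]; split=> [x xG|s h sS hG]; rewrite !ffunE.
  by apply: r0; rewrite groupMr.
by rewrite -mulgA (rM s (h * g)%g) ?groupM.
Qed.

Lemma ind_mul_in {r1 r2} : A r1 -> A r2 -> A (ind_mul r1 r2).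
Proof.
move=> [a0 aM] [b0 bM]; split=> [x xG|s g sS gG]; rewrite !ffunE.
  by rewrite a0 // mul0r.
by rewrite aM // bM // (alg_autM (act_alg_aut sS)).
Qed.

Lemma ind_zero_in : A ind_zero.
Proof. by split=> [x _|s g sS _]; rewrite !ffunE ?act0. Qed.

#[local] Hint Resolve ind_emb_in ind_zero_in : core.

Lemma ind_emb_act s b : s \in S -> ind_emb (act s b) = ind_act s (ind_emb b).
Proof.
move=> sS; apply/ffunP=> x; rewrite !ffunE groupMr //.
by case: ifP => // xS; rewrite actM.
Qed.

Lemma ind_act_emb1 {s} : s \in S -> ind_act s (ind_emb 1) = ind_emb 1.
Proof. by move=> sS; rewrite -ind_emb_act ?act_oner. Qed.

Lemma ind_emb_at1 b : ind_emb b 1%g = b.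
Proof. by rewrite ffunE group1 act1. Qed.

Lemma ind_emb_inj : injective ind_emb.
Proof. by move=> b c /ffunP/(_ 1%g); rewrite !ind_emb_at1. Qed.

Lemma ind_emb0 : ind_emb 0 = ind_zero.
Proof. by apply/ffunP=> x; rewrite !ffunE; case: ifP => // xS; rewrite act0. Qed.

Lemma ind_embL c b b' :
  ind_emb (c *: b + b') = ind_add (ind_scale c (ind_emb b)) (ind_emb b').
Proof.
apply/ffunP=> x; rewrite !ffunE; case: ifP => xS; last by rewrite scaler0 addr0.
by rewrite (alg_autL (act_alg_aut xS)).
Qed.

Lemma ind_embM b b' : ind_emb (b * b') = ind_mul (ind_emb b) (ind_emb b').
Proof.
apply/ffunP=> x; rewrite !ffunE; case: ifP => xS; last by rewrite mulr0.
by rewrite (alg_autM (act_alg_aut xS)).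
Qed.

Lemma ind_emb1_central r : ind_mul (ind_emb 1) r = ind_mul r (ind_emb 1).
Proof.
apply/ffunP=> x; rewrite !ffunE; case: ifP => xS; last by rewrite mul0r mulr0.
by rewrite act_oner // mul1r mulr1.
Qed.

Lemma ind_emb1_neq0 : ind_emb 1 <> ind_zero.
Proof. by rewrite -ind_emb0 => /ind_emb_inj /eqP; rewrite (negbTE (simple_oner_neq0 simpleB)). Qed.

Lemma ind_mul_act_emb1 r g : A r -> g \in G ->
  ind_mul r (ind_act g^-1 (ind_emb 1)) = ind_act g^-1 (ind_emb (r g)).
Proof.
move=> [r0 rM] gG; apply/ffunP=> x; rewrite !ffunE.
case: ifP => xS; last by rewrite mulr0.
by rewrite act_oner // mulr1 -rM ?mulgKV // mem_subG.
Qed.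

Lemma ind_central_idem_pt {r} : A r -> ind_mul r r = r ->
  (forall r', A r' -> ind_mul r r' = ind_mul r' r) ->
  forall x, x \in G -> r x = 0 \/ r x = 1.
Proof.
move=> rA rr rC x xG; apply: (simple_central_idem simpleB).
  move=> b; have := rC _ (ind_act_in (groupVr xG) (ind_emb_in b)).
  by move/ffunP/(_ x); rewrite !ffunE mulgV group1 act1.
by have := congr1 (fun f : {ffun gT -> B} => f x) rr; rewrite /= ffunE.
Qed.

Lemma ind_idem_le_emb1 w : A w -> w <> ind_zero -> ind_mul w w = w ->
  (forall r, A r -> ind_mul w r = ind_mul r w) -> ind_mul w (ind_emb 1) = w ->
  w = ind_emb 1.
Proof.
move=> wA wn0 ww wC w1.
have w01 := ind_central_idem_pt wA ww wC.
have wS y : y \notin S -> w y = 0 by move=> yS; rewrite -w1 !ffunE (negbTE yS) mulr0.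
case: wA => w0 wM.
have [x wx] : exists x, w x != 0.
  case: (pickP (fun x => w x != 0)) => [x wx|w_0]; first by exists x.
  by case: wn0; apply/ffunP=> x; rewrite ffunE; apply/eqP/negbFE/w_0.
have xS : x \in S by apply: contraNT wx => /wS ->.
have w11 : w 1%g = 1.
  case: (w01 _ (group1 G)) => // w10.
  by move: wx; rewrite -[x]mulg1 wM // w10 act0 ?eqxx.
apply/ffunP=> y; rewrite ffunE; case: ifP => yS; last by rewrite wS ?yS.
by rewrite -[y]mulg1 wM // w11 mulg1.
Qed.

Definition ind_twist (n : gT) (psi : B -> B) (r : {ffun gT -> B}) : {ffun gT -> B} :=
  [ffun y => if y \in G then psi (r (n^-1 * y)%g) else 0].

(* Together with [alg_aut psi], psi is an S-algebra isomorphism B -> B^(n). *)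
Definition conj_twisted (n : gT) (psi : B -> B) :=
  forall s b, s \in S -> psi (act s b) = act (n * s * n^-1)%g (psi b).

Lemma conj_twisted_can {n psi psi'} : conj_twisted n psi -> cancel psi psi' ->
  cancel psi' psi ->
  forall s x, s \in S -> psi' (act (n * s * n^-1)%g x) = act s (psi' x).
Proof. by move=> tw K K' s x sS; rewrite -{1}[x]K' -tw // K. Qed.

Lemma S_aut_twisted_comp {n p1 p1' p2} : alg_aut p1 -> conj_twisted n p1 ->
  cancel p1 p1' -> cancel p1' p1 -> alg_aut p2 -> conj_twisted n p2 ->
  S_aut S act (p1' \o p2).
Proof.
move=> a1 t1 K K' a2 t2; split; first exact: alg_aut_comp (alg_aut_can a1 K K') a2.
by move=> s b sS /=; rewrite t2 // (conj_twisted_can t1 K K').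
Qed.

Lemma eq_ind_twist n p1 p2 r : p1 =1 p2 -> ind_twist n p1 r = ind_twist n p2 r.
Proof. by move=> E; apply/ffunP=> y; rewrite !ffunE E. Qed.

Lemma ind_twist_emb n psi b : n \in G -> ind_twist n psi (ind_emb b) n = psi b.
Proof. by move=> nG; rewrite ffunE nG mulVg ind_emb_at1. Qed.

Lemma ind_twist_emb1 n psi : n \in G -> n \in 'N(S) -> alg_aut psi ->
  ind_twist n psi (ind_emb 1) = ind_act n^-1 (ind_emb 1).
Proof.
move=> nG nN psiA; apply/ffunP=> y; rewrite !ffunE.
case: ifP => yG.
  have yS : ((y * n^-1)%g \in S) = ((n^-1 * y)%g \in S).
    rewrite -[RHS](memJ_norm _ (groupVr nN)) conjgE invgK -(mulgA n^-1%g) mulKVg //.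
  rewrite yS; case: ifP => nyS; rewrite ?(alg_aut0 psiA) //.
  by rewrite !act_oner ?yS // (alg_aut1 psiA).
by case: ifP => // /mem_subG; rewrite groupMr ?groupV // yG.
Qed.

Lemma conj_twisted_inv {n psi psi'} : n \in 'N(S) -> conj_twisted n psi ->
  cancel psi psi' -> cancel psi' psi -> conj_twisted n^-1 psi'.
Proof.
move=> nN tw K K' t x tS; rewrite invgK.
have tE : t = (n * (n^-1 * t * n) * n^-1)%g by rewrite !mulgA mulgV mul1g mulgK.
by rewrite {1}tE (conj_twisted_can tw K K') // mem_conjg_norm.
Qed.

Lemma ind_twist_in n psi r : n \in G -> n \in 'N(S) -> conj_twisted n psi ->
  A r -> A (ind_twist n psi r).
Proof.
move=> nG nN tw [r0 rM]; split=> [x xG|s g sS gG]; rewrite !ffunE; first by rewrite (negbTE xG).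
rewrite (groupMl _ (mem_subG sS)) gG.
have -> : (n^-1 * (s * g))%g = ((n^-1 * s * n) * (n^-1 * g))%g by rewrite !mulgA mulgK.
rewrite rM ?mem_conjg_norm ?groupM ?groupV // tw ?mem_conjg_norm //.
by rewrite !mulgA mulgV mul1g mulgK.
Qed.

Lemma ind_twistK n psi psi' r : n \in G -> cancel psi psi' -> A r ->
  ind_twist n^-1 psi' (ind_twist n psi r) = r.
Proof.
move=> nG K [r0 _]; apply/ffunP=> y; rewrite !ffunE invgK.
case: ifP => yG; last by rewrite r0 ?yG.
by rewrite groupM // mulKg K.
Qed.

Lemma ind_twist_aut n psi : n \in G -> n \in 'N(S) -> alg_aut psi -> conj_twisted n psi ->
  Ind_aut G S act (ind_twist n psi).
Proof.
move=> nG nN psiA tw; have [_ _ _ [psi' K K']] := psiA.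
have nVG : n^-1%g \in G by rewrite groupV.
split; first by move=> r; apply: ind_twist_in.
split.
  move=> c r1 r2 _ _; apply/ffunP=> y; rewrite !ffunE.
  by case: ifP => _; rewrite ?scaler0 ?addr0 // (alg_autL psiA).
split.
  move=> r1 r2 _ _; apply/ffunP=> y; rewrite !ffunE.
  by case: ifP => _; rewrite ?mulr0 // (alg_autM psiA).
split.
  apply/ffunP=> y; rewrite !ffunE.
  by case: ifP => yG; rewrite // groupMl ?groupV // yG (alg_aut1 psiA).
split.
  by move=> r1 r2 r1A r2A r12; rewrite -(ind_twistK nG K r1A) r12 ind_twistK.
split.
  move=> r' r'A; exists (ind_twist n^-1 psi' r'); split.
    apply: ind_twist_in => //; first by rewrite groupV.
    exact: (conj_twisted_inv nN tw K K').
  by rewrite -{1}(invgK n) ind_twistK.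
move=> g r gG _; apply/ffunP=> y; rewrite !ffunE groupMr //.
by case: ifP => // _; rewrite mulgA.
Qed.

Section IndAut.
Variable phi : {ffun gT -> B} -> {ffun gT -> B}.
Hypothesis phiA : Ind_aut G S act phi.

Lemma Ind_aut_in {r} : A r -> A (phi r).
Proof. by case: phiA => H _; apply: H. Qed.
Lemma Ind_autL c {r1 r2} : A r1 -> A r2 ->
  phi (ind_add (ind_scale c r1) r2) = ind_add (ind_scale c (phi r1)) (phi r2).
Proof. by case: phiA => _ [H _]; apply: H. Qed.
Lemma Ind_autM {r1 r2} : A r1 -> A r2 -> phi (ind_mul r1 r2) = ind_mul (phi r1) (phi r2).
Proof. by case: phiA => _ [_ [H _]]; apply: H. Qed.
Lemma Ind_aut_inj {r1 r2} : A r1 -> A r2 -> phi r1 = phi r2 -> r1 = r2.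
Proof. by case: phiA => _ [_ [_ [_ [H _]]]]; apply: H. Qed.
Lemma Ind_aut_surj {r'} : A r' -> exists r, A r /\ phi r = r'.
Proof. by case: phiA => _ [_ [_ [_ [_ [H _]]]]]; apply: H. Qed.
Lemma Ind_aut_act {g r} : g \in G -> A r -> phi (ind_act g r) = ind_act g (phi r).
Proof. by case: phiA => _ [_ [_ [_ [_ [_ H]]]]]; apply: H. Qed.

Lemma Ind_aut_zero : phi ind_zero = ind_zero.
Proof.
have zero_eq : ind_add (ind_scale (-1) ind_zero) ind_zero = ind_zero.
  by apply/ffunP=> x; rewrite !ffunE scaler0 addr0.
rewrite -{1}zero_eq Ind_autL //; apply/ffunP=> x.
by rewrite !ffunE scaleN1r addNr.
Qed.

Lemma Ind_aut_out {r x} : A r -> x \notin G -> phi r x = 0.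
Proof. by move=> /Ind_aut_in [r0 _]; apply: r0. Qed.

(* phi maps the central idempotent ind_emb 1, supported on S, to a central
   idempotent; simplicity of B makes it the indicator of a single coset. *)
Definition aut_idem := phi (ind_emb 1).

Lemma aut_idem_in : A aut_idem.
Proof. exact/Ind_aut_in/ind_emb_in. Qed.

Lemma aut_idem_idem : ind_mul aut_idem aut_idem = aut_idem.
Proof. by rewrite /aut_idem -Ind_autM // -ind_embM mulr1. Qed.

Lemma aut_idem_central r : A r -> ind_mul aut_idem r = ind_mul r aut_idem.
Proof.
move=> rA; case: (Ind_aut_surj rA) => r0 [r0A <-].
by rewrite /aut_idem -!Ind_autM // ind_emb1_central.
Qed.

Lemma aut_idem_pt {x} : x \in G -> aut_idem x = 0 \/ aut_idem x = 1.
Proof. exact: (ind_central_idem_pt aut_idem_in aut_idem_idem aut_idem_central). Qed.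

Lemma aut_idem_exists : exists2 x, x \in G & aut_idem x = 1.
Proof.
case: (pickP (fun x => (x \in G) && (aut_idem x == 1))) => [x /andP[xG /eqP ex]|none].
  by exists x.
exfalso; apply: ind_emb1_neq0; apply: Ind_aut_inj; rewrite //.
rewrite Ind_aut_zero; apply/ffunP=> x; rewrite ffunE; case xG: (x \in G).
  by case: (aut_idem_pt xG) => // ex; move: (none x); rewrite xG ex eqxx.
by rewrite Ind_aut_out ?xG.
Qed.

Section AutRep.
Variable n : gT.
Hypothesis idem_n : aut_idem n = 1.

Lemma aut_idem_memG : n \in G.
Proof.
apply: contraT => nnG; move: idem_n; rewrite Ind_aut_out // => /eqP.
by rewrite eq_sym (negbTE (simple_oner_neq0 simpleB)).
Qed.

Lemma aut_idem_translate : aut_idem = ind_act n^-1 (ind_emb 1).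
Proof.
set u := ind_act n^-1 (ind_emb 1).
have uA : A u := ind_act_in (groupVr aut_idem_memG) (ind_emb_in 1).
have u01 x : u x = 0 \/ u x = 1.
  by rewrite !ffunE; case: ifP => xS; [rewrite act_oner //; right | left].
have u_idem : ind_mul u u = u.
  by apply/ffunP=> x; case: (u01 x) => ux; rewrite ffunE ux ?mulr0 ?mulr1.
have uC r : ind_mul u r = ind_mul r u.
  by apply/ffunP=> x; rewrite [LHS]ffunE [RHS]ffunE; case: (u01 x) => ->;
    rewrite ?mulr0 ?mul0r ?mulr1 ?mul1r.
have u_le : ind_mul u aut_idem = u.
  apply/ffunP=> x; rewrite !ffunE; case: ifP => xS; last by rewrite mul0r.
  have [_ eM] := aut_idem_in.
  have ex : aut_idem x = 1.
    by rewrite -(mulgKV n x) eM ?aut_idem_memG // idem_n act_oner.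
  by rewrite ex act_oner // mulr1.
case: (Ind_aut_surj uA) => w [wA phi_w].
suff wE : w = ind_emb 1 by rewrite /aut_idem -wE phi_w.
apply: ind_idem_le_emb1 => //.
- move=> w0; move: phi_w; rewrite w0 Ind_aut_zero => /ffunP/(_ n).
  rewrite !ffunE mulgV group1 act1 => /eqP.
  by rewrite eq_sym (negbTE (simple_oner_neq0 simpleB)).
- by apply: (Ind_aut_inj (ind_mul_in wA wA) wA); rewrite Ind_autM // phi_w u_idem.
- by move=> r rA; apply: (Ind_aut_inj (ind_mul_in wA rA) (ind_mul_in rA wA));
    rewrite !Ind_autM // phi_w uC.
by apply: (Ind_aut_inj (ind_mul_in wA (ind_emb_in 1)) wA); rewrite Ind_autM // phi_w u_le.
Qed.

Lemma aut_idem_norm : n \in 'N(S).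
Proof.
rewrite -groupV inE; apply/subsetP=> y /imsetP [s sS ->].
have : aut_idem (n * s)%g = 1.
  rewrite -idem_n /aut_idem -{2}(ind_act_emb1 sS) Ind_aut_act ?mem_subG //.
  by rewrite ffunE.
rewrite aut_idem_translate !ffunE; case: ifP => [|_ /eqP].
  by rewrite conjgE invgK mulgA.
by rewrite eq_sym (negbTE (simple_oner_neq0 simpleB)).
Qed.

Definition aut_comp b := phi (ind_emb b) n.

(* With g = n^-1 y, multiplying r by the translate of ind_emb 1 supported on S g
   isolates the value r g, and phi maps that translate to one equal to 1 at y. *)
Lemma Ind_aut_value {r y} : A r -> y \in G -> phi r y = aut_comp (r (n^-1 * y)%g).
Proof.
move=> rA yG; set g := (n^-1 * y)%g.
have gG : g \in G by rewrite groupM ?groupV ?aut_idem_memG.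
have gVG : g^-1%g \in G by rewrite groupV.
have v1 : phi (ind_act g^-1 (ind_emb 1)) y = 1.
  by rewrite Ind_aut_act // ffunE -/aut_idem /g invMg invgK mulKVg.
rewrite -[phi r y]mulr1 -v1.
have := congr1 (fun f : {ffun gT -> B} => f y) (Ind_autM rA (ind_act_in gVG (ind_emb_in 1))).
rewrite ffunE /= => <-.
rewrite ind_mul_act_emb1 // Ind_aut_act // ffunE /aut_comp.
by rewrite /g invMg invgK mulKVg.
Qed.

Lemma aut_comp_twisted : conj_twisted n aut_comp.
Proof.
move=> s b sS; rewrite /aut_comp ind_emb_act // Ind_aut_act ?mem_subG // ffunE.
case: (Ind_aut_in (ind_emb_in b)) => _ pM.
by rewrite -{1}(mulgKV n (n * s)%g) pM ?aut_idem_memG // mem_conjgV_norm // aut_idem_norm.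
Qed.

Lemma aut_comp_alg_aut : alg_aut aut_comp.
Proof.
have comp_inj : injective aut_comp.
  move=> b c bc; apply: ind_emb_inj; apply: Ind_aut_inj; rewrite //.
  apply/ffunP=> y; case yG: (y \in G); last by rewrite !Ind_aut_out ?yG.
  rewrite !Ind_aut_value // !ffunE; case: ifP => // yS.
  by rewrite !aut_comp_twisted // bc.
split.
- by move=> c x y; rewrite /aut_comp ind_embL Ind_autL // !ffunE.
- by rewrite /aut_comp -/aut_idem idem_n.
- by move=> x y; rewrite /aut_comp ind_embM Ind_autM // ffunE.
apply: injective_surjective_bij => // c.
have cA : A (ind_act n^-1 (ind_emb c)) := ind_act_in (groupVr aut_idem_memG) (ind_emb_in c).
case: (Ind_aut_surj cA) => r [rA rc]; exists (r 1%g).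
have := Ind_aut_value rA aut_idem_memG; rewrite mulVg => <-.
by rewrite rc ffunE mulgV ind_emb_at1.
Qed.

Lemma Ind_aut_eqv_twist : Ind_eqv G S act phi (ind_twist n aut_comp).
Proof.
move=> r rA; apply/ffunP=> y; rewrite ffunE; case: ifP => yG.
  exact: Ind_aut_value.
by rewrite Ind_aut_out ?yG.
Qed.

End AutRep.
End IndAut.

Definition cosetrep g := repr (S :* g).

Lemma cosetrep_mem g : cosetrep g \in S :* g.
Proof. exact: (mem_repr g (rcoset_refl S g)). Qed.

Lemma cosetrep_eq g h : S :* g = S :* h -> cosetrep g = cosetrep h.
Proof. by rewrite /cosetrep => ->. Qed.

Lemma cosetrepK g : cosetrep (cosetrep g) = cosetrep g.
Proof. exact/cosetrep_eq/rcoset_repr. Qed.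

Lemma cosetrep_memG {g} : g \in G -> cosetrep g \in G.
Proof.
move=> gG; have := cosetrep_mem g; rewrite mem_rcoset => /mem_subG gS.
by rewrite -(mulgKV g (cosetrep g)) groupM.
Qed.

Lemma cosetrep_mulS s g : s \in S -> cosetrep (s * g)%g = cosetrep g.
Proof. by move=> sS; apply/cosetrep_eq/rcoset_eqP; rewrite mem_rcoset mulgK. Qed.

Lemma mul_cosetrepV_mem g : (g * (cosetrep g)^-1)%g \in S.
Proof. by have := cosetrep_mem g; rewrite mem_rcoset -groupV invMg invgK. Qed.

Definition aut_rep phi :=
  cosetrep (odflt 1%g [pick x | (x \in G) && (aut_idem phi x == 1)]).

Lemma aut_rep_spec phi : Ind_aut G S act phi ->
  [/\ aut_idem phi (aut_rep phi) = 1, aut_rep phi \in G, aut_rep phi \in 'N(S) &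
      cosetrep (aut_rep phi) = aut_rep phi].
Proof.
move=> phiA; rewrite /aut_rep; case: pickP => [x /andP [xG /eqP idem_x] | none]; last first.
  by case: (aut_idem_exists phiA) => x xG idem_x; move: (none x); rewrite xG idem_x eqxx.
have idem_rep : aut_idem phi (cosetrep x) = 1.
  have := cosetrep_mem x; rewrite mem_rcoset => xS.
  by rewrite (aut_idem_translate phiA idem_x) !ffunE xS act_oner.
split; rewrite /= ?cosetrepK //.
  exact: (aut_idem_memG phiA idem_rep).
exact: (aut_idem_norm phiA idem_rep).
Qed.

Lemma aut_rep_twist {phi n psi} : Ind_aut G S act phi -> n \in G -> n \in 'N(S) ->
  alg_aut psi -> Ind_eqv G S act phi (ind_twist n psi) -> cosetrep n = n ->
  aut_rep phi = n /\ aut_comp phi n =1 psi.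
Proof.
move=> phiA nG nN psiA phi_eqv n_rep; split; last first.
  by move=> b; rewrite /aut_comp phi_eqv // ind_twist_emb.
have [idem_rep _ _ rep_rep] := aut_rep_spec phiA.
move: idem_rep; rewrite /aut_idem phi_eqv // ind_twist_emb1 // !ffunE.
case: ifP => [repS _|_ /eqP]; last by rewrite eq_sym (negbTE (simple_oner_neq0 simpleB)).
by rewrite -n_rep -rep_rep; apply: cosetrep_eq; apply/rcoset_eqP; rewrite mem_rcoset.
Qed.

Section Normal.
Hypothesis nSG : S <| G.

Let norm_of_memG {n} : n \in G -> n \in 'N(S).
Proof. exact: (subsetP (normal_norm nSG)). Qed.

Section Enumeration.
Hypothesis conj_isoS : forall g, g \in G -> conj_iso S act g.
Variable fS : 'I_#|S| -> B -> B.
Hypotheses (fS_aut : forall i, S_aut S act (fS i))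
  (fS_inj : forall i j, fS i =1 fS j -> i = j)
  (fS_surj : forall f, S_aut S act f -> exists i, fS i =1 f).

Definition conj_twister n : B -> B :=
  epsilon (inhabits id) (fun psi => alg_aut psi /\ conj_twisted n psi).

Lemma conj_twisterP n : n \in G ->
  alg_aut (conj_twister n) /\ conj_twisted n (conj_twister n).
Proof.
move=> nG; apply: (epsilon_spec (inhabits id) (fun psi => alg_aut psi /\ conj_twisted n psi)).
have [psi [psiA psi_conj]] := conj_isoS (groupVr nG); exists psi; split=> // s b sS.
have := psi_conj (n * s * n^-1)%g b (mem_conjgV_norm (norm_of_memG nG) sS).
by rewrite invgK !mulgA mulVg mul1g mulgKV.
Qed.

Definition S_index g : 'I_#|S| := enum_rank_in (group1 S) g.

(* The i-th element g = s n of G, with n = cosetrep g, induces the twist by n of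
   the s-th S-automorphism followed by a chosen S-isomorphism B -> B^(n). *)
Definition enum_rep (i : 'I_#|G|) := cosetrep (enum_val i).

Definition enum_S_aut (i : 'I_#|G|) := fS (S_index (enum_val i * (enum_rep i)^-1)%g).

Definition aut_enum i := ind_twist (enum_rep i) (conj_twister (enum_rep i) \o enum_S_aut i).

Lemma enum_rep_memG i : enum_rep i \in G.
Proof. exact: cosetrep_memG (enum_valP i). Qed.

Lemma aut_enum_comp_alg_aut i : alg_aut (conj_twister (enum_rep i) \o enum_S_aut i).
Proof.
have [twA _] := conj_twisterP (enum_rep_memG i).
by have [fA _] := fS_aut (S_index (enum_val i * (enum_rep i)^-1)%g); apply: alg_aut_comp.
Qed.

Lemma aut_enum_aut i : Ind_aut G S act (aut_enum i).
Proof.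
have nG := enum_rep_memG i; have [_ tw] := conj_twisterP nG.
apply: ind_twist_aut; rewrite ?norm_of_memG //; first exact: aut_enum_comp_alg_aut.
have [_ f_act] := fS_aut (S_index (enum_val i * (enum_rep i)^-1)%g).
by move=> s b sS /=; rewrite /enum_S_aut f_act // tw.
Qed.

Lemma aut_enum_inj i i' : Ind_eqv G S act (aut_enum i) (aut_enum i') -> i = i'.
Proof.
move=> eqv; set n := enum_rep i; set n' := enum_rep i'.
have nG : n \in G := enum_rep_memG i.
have n'G : n' \in G := enum_rep_memG i'.
have [rep_i comp_i] := aut_rep_twist (aut_enum_aut i) nG (norm_of_memG nG)
  (aut_enum_comp_alg_aut i) (fun r _ => erefl) (cosetrepK _).
have [rep_i' comp_i'] := aut_rep_twist (aut_enum_aut i') n'G (norm_of_memG n'G)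
  (aut_enum_comp_alg_aut i') (fun r _ => erefl) (cosetrepK _).
have rep_eq : n = n' by rewrite -rep_i -rep_i' /aut_rep /aut_idem eqv.
have comp_eq : conj_twister n \o enum_S_aut i =1 conj_twister n' \o enum_S_aut i'.
  by move=> b; rewrite -comp_i -comp_i' /aut_comp eqv // rep_eq.
have S_index_eq : S_index (enum_val i * n^-1)%g = S_index (enum_val i' * n'^-1)%g.
  apply: fS_inj => b; apply: (alg_aut_inj (proj1 (conj_twisterP nG))).
  by rewrite [in RHS]rep_eq; apply: comp_eq.
move: S_index_eq => /(congr1 enum_val); rewrite !(enum_rankK_in (group1 S)) ?mul_cosetrepV_mem //.
by rewrite rep_eq => /mulIg /enum_val_inj.
Qed.

Lemma aut_enum_surj phi : Ind_aut G S act phi -> exists i, Ind_eqv G S act (aut_enum i) phi.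
Proof.
move=> phiA; have [idem_n nG nN n_rep] := aut_rep_spec phiA.
set n := aut_rep phi in idem_n nG nN n_rep.
have [twA tw] := conj_twisterP nG; have [_ _ _ [tw' twK tw'K]] := twA.
have [j fS_j] := fS_surj (S_aut_twisted_comp twA tw twK tw'K
  (aut_comp_alg_aut phiA idem_n) (aut_comp_twisted phiA idem_n)).
have jS : enum_val j \in S := enum_valP j.
have gG : (enum_val j * n)%g \in G := groupM (mem_subG jS) nG.
exists (enum_rank_in (group1 G) (enum_val j * n)%g) => r rA.
rewrite (Ind_aut_eqv_twist phiA idem_n rA) /aut_enum /enum_S_aut /enum_rep enum_rankK_in //.
rewrite cosetrep_mulS // n_rep mulgK /S_index (enum_valK_in (group1 S)).
by apply: eq_ind_twist => b /=; rewrite fS_j /= tw'K.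
Qed.

End Enumeration.

Lemma card_Ind_aut_normal : (forall g, g \in G -> conj_iso S act g) ->
  has_card_mod (S_aut S act) (fun f g => f =1 g) #|S| ->
  has_card_mod (Ind_aut G S act) (Ind_eqv G S act) #|G|.
Proof.
move=> conj_isoS [fS [fS_aut fS_inj fS_surj]]; exists (aut_enum fS); split.
- exact: aut_enum_aut.
- exact: aut_enum_inj.
exact: aut_enum_surj.
Qed.

End Normal.

Section Counting.
Hypotheses (invS : invariants_trivial S act) (galS : galois_bijective S act).
Variable F : 'I_#|G| -> {ffun gT -> B} -> {ffun gT -> B}.
Hypotheses (F_aut : forall i, Ind_aut G S act (F i))
  (F_inj : forall i j, Ind_eqv G S act (F i) (F j) -> i = j)
  (F_surj : forall phi, Ind_aut G S act phi -> exists i, Ind_eqv G S act (F i) phi).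

Definition enum_aut_rep i := aut_rep (F i).

Definition enum_aut_comp i := aut_comp (F i) (enum_aut_rep i).

Definition rep_fiber v := [set i | enum_aut_rep i == v].

Definition aut_reps := [set enum_aut_rep i | i : 'I_#|G|].

Lemma enum_aut_idem i : aut_idem (F i) (enum_aut_rep i) = 1.
Proof. by case: (aut_rep_spec (F_aut i)). Qed.

Lemma enum_aut_comp_alg_aut i : alg_aut (enum_aut_comp i).
Proof. exact: (aut_comp_alg_aut (F_aut i) (enum_aut_idem i)). Qed.

Lemma enum_aut_comp_twisted i : conj_twisted (enum_aut_rep i) (enum_aut_comp i).
Proof. exact: (aut_comp_twisted (F_aut i) (enum_aut_idem i)). Qed.

Lemma enum_aut_inj i i' : enum_aut_rep i = enum_aut_rep i' ->
  enum_aut_comp i =1 enum_aut_comp i' -> i = i'.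
Proof.
move=> rep_eq comp_eq; apply: F_inj => r rA.
rewrite (Ind_aut_eqv_twist (F_aut i) (enum_aut_idem i) rA).
rewrite (Ind_aut_eqv_twist (F_aut i') (enum_aut_idem i') rA).
by rewrite -/(enum_aut_comp i) -/(enum_aut_comp i') rep_eq; apply: eq_ind_twist.
Qed.

Lemma aut_repsP v : v \in aut_reps -> [/\ v \in G, v \in 'N(S) & cosetrep v = v].
Proof. by case/imsetP=> i _ ->; have [_ ? ? ?] := aut_rep_spec (F_aut i). Qed.

(* Composing with the inverse of one component identifies a fiber with a
   family of distinct S-automorphisms of B. *)
Lemma rep_fiber_S_aut v i0 q : i0 \in rep_fiber v ->
  cancel (enum_aut_comp i0) q -> cancel q (enum_aut_comp i0) ->
  (forall j : 'I_#|rep_fiber v|, S_aut S act (q \o enum_aut_comp (enum_val j))) /\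
  (forall j j' : 'I_#|rep_fiber v|,
    q \o enum_aut_comp (enum_val j) =1 q \o enum_aut_comp (enum_val j') -> j = j').
Proof.
move=> i0v qK qK'; split.
  move=> j; have := enum_valP j; rewrite inE => /eqP rep_j.
  move: i0v; rewrite inE => /eqP rep_i0.
  apply: (S_aut_twisted_comp (enum_aut_comp_alg_aut i0) (enum_aut_comp_twisted i0) qK qK').
    exact: enum_aut_comp_alg_aut.
  by have := enum_aut_comp_twisted (enum_val j); rewrite rep_j rep_i0.
move=> j j' comp_eq; apply: enum_val_inj; apply: enum_aut_inj.
  by have := enum_valP j; have := enum_valP j'; rewrite !inE => /eqP -> /eqP ->.
by move=> b; have := comp_eq b; rewrite /= => /(congr1 (enum_aut_comp i0)); rewrite !qK'.
Qed.

Lemma card_rep_fiber_le v : (#|rep_fiber v| <= #|S|)%N.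
Proof.
case: (pickP (mem (rep_fiber v))) => [i0 i0v | none]; last by rewrite (eq_card0 none).
have [_ _ _ [q qK qK']] := enum_aut_comp_alg_aut i0.
have [fS_aut fS_inj] := rep_fiber_S_aut i0v qK qK'.
exact: (S_aut_family_card_le simpleB invS galS fS_aut fS_inj).
Qed.

Lemma card_G_sum_fibers : #|G| = (\sum_(v in aut_reps) #|rep_fiber v|)%N.
Proof.
have card_I : #|'I_#|G| | = (\sum_(v in aut_reps) #|rep_fiber v|)%N.
  rewrite -[LHS]sum1_card (partition_big enum_aut_rep (mem aut_reps)) /=; last first.
    by move=> i _; apply: imset_f.
  by apply: eq_bigr => v _; rewrite -[RHS]sum1_card; apply: eq_bigl => i; rewrite !inE.
by rewrite -card_I card_ord.
Qed.

Lemma card_aut_reps_rcosets : #|[set S :* v | v in aut_reps]| = #|aut_reps|.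
Proof.
apply: card_in_imset => v v' vR v'R coset_eq.
have [_ _ v_rep] := aut_repsP vR; have [_ _ v'_rep] := aut_repsP v'R.
by rewrite -v_rep -v'_rep; apply: cosetrep_eq.
Qed.

Lemma card_aut_reps_le : (#|aut_reps| <= #|'N_G(S) : S|)%N.
Proof.
rewrite -card_aut_reps_rcosets; apply: subset_leq_card; apply/subsetP=> C /imsetP [v vR ->].
have [vG vN _] := aut_repsP vR.
by rewrite -rcosetE; apply: imset_f; rewrite inE vG.
Qed.

(* |G| <= |aut_reps| |S| <= |N_G(S) : S| |S| = |N_G(S)| <= |G|: all are equalities. *)
Lemma card_aut_reps_mul : (#|aut_reps| * #|S| = #|G|)%N /\ #|'N_G(S)| = #|G|.
Proof.
have G_le : (#|G| <= #|aut_reps| * #|S|)%N.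
  by rewrite card_G_sum_fibers -sum_nat_const; apply: leq_sum => v _; apply: card_rep_fiber_le.
have NG_le : (#|'N_G(S)| <= #|G|)%N by apply: subset_leq_card; rewrite subsetIl.
have sSNG : S \subset 'N_G(S) by rewrite subsetI sSG normG.
have RS_le : (#|aut_reps| * #|S| <= #|'N_G(S)|)%N.
  by rewrite -(Lagrange sSNG) mulnC leq_pmul2l ?cardG_gt0 ?card_aut_reps_le.
split; apply/eqP; rewrite eqn_leq.
  by rewrite G_le (leq_trans RS_le NG_le).
by rewrite NG_le (leq_trans G_le RS_le).
Qed.

Lemma normal_of_card : S <| G.
Proof.
rewrite /normal sSG /=; have [_ NG_eq] := card_aut_reps_mul.
have : 'N_G(S) == G :> {set gT} by rewrite eqEcard subsetIl NG_eq leqnn.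
by move/eqP => <-; rewrite subsetIr.
Qed.

Lemma card_rep_fiber v : v \in aut_reps -> #|rep_fiber v| = #|S|.
Proof.
apply: (@sum_leq_const_eq _ _ (fun v => #|rep_fiber v|)) => [w _|].
  exact: card_rep_fiber_le.
by rewrite -card_G_sum_fibers (proj1 card_aut_reps_mul).
Qed.

(* A full fiber exhausts Aut_S(B): each S-automorphism f gives the automorphism
   induced by (v0, enum_aut_comp i0 \o f), which lies in the fiber over v0. *)
Lemma card_S_aut : has_card_mod (S_aut S act) (fun f g => f =1 g) #|S|.
Proof.
pose i0 := enum_rank_in (group1 G) 1%g; pose v0 := enum_aut_rep i0.
have v0R : v0 \in aut_reps by apply: imset_f.
have i0v0 : i0 \in rep_fiber v0 by rewrite inE.
have fiber_eq := card_rep_fiber v0R.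
have [_ _ _ [q qK qK']] := enum_aut_comp_alg_aut i0.
have [fS_aut fS_inj] := rep_fiber_S_aut i0v0 qK qK'.
exists (fun j => q \o enum_aut_comp (enum_val (cast_ord (esym fiber_eq) j))); split.
- by move=> j; apply: fS_aut.
- by move=> j j' /fS_inj /(congr1 (cast_ord fiber_eq)); rewrite !cast_ordKV.
move=> f [fA f_act]; have [v0G v0N v0_rep] := aut_repsP v0R.
have twA : Ind_aut G S act (ind_twist v0 (enum_aut_comp i0 \o f)).
  apply: ind_twist_aut => //; first exact: alg_aut_comp (enum_aut_comp_alg_aut i0) fA.
  by move=> s b sS /=; rewrite f_act // enum_aut_comp_twisted.
have [i eqv] := F_surj twA.
have [rep_i comp_i] := aut_rep_twist (F_aut i) v0G v0N
  (alg_aut_comp (enum_aut_comp_alg_aut i0) fA) eqv v0_rep.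
have iv0 : i \in rep_fiber v0 by rewrite inE -rep_i.
exists (cast_ord fiber_eq (enum_rank_in iv0 i)) => b /=.
by rewrite cast_ordK (enum_rankK_in iv0 iv0) /enum_aut_comp /enum_aut_rep rep_i comp_i /= qK.
Qed.

Lemma rcosets_aut_reps : [set S :* v | v in aut_reps] = rcosets S G.
Proof.
apply/eqP; rewrite eqEcard; apply/andP; split.
  apply/subsetP=> C /imsetP [v vR ->]; have [vG _ _] := aut_repsP vR.
  by rewrite -rcosetE; apply: imset_f.
rewrite card_aut_reps_rcosets -(leq_pmul2l (cardG_gt0 S)) (Lagrange sSG).
by rewrite -(proj1 card_aut_reps_mul) mulnC.
Qed.

(* g lies in the coset S v of a representative v = enum_aut_rep i, and
   (act (g v^-1))^-1 followed by the inverse of enum_aut_comp i is B^(g) ~ B. *)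
Lemma conj_iso_of_card g : g \in G -> conj_iso S act g.
Proof.
move=> gG; have : S :* g \in [set S :* v | v in aut_reps].
  by rewrite rcosets_aut_reps -rcosetE; apply: imset_f.
case/imsetP=> v vR coset_eq; case/imsetP: (vR) => i _ v_eq.
have tS : (g * v^-1)%g \in S by rewrite -mem_rcoset -coset_eq rcoset_refl.
have [vG vN _] := aut_repsP vR.
have [_ _ _ [q qK qK']] := enum_aut_comp_alg_aut i.
exists (q \o act (g * v^-1)^-1%g); split.
  exact: alg_aut_comp (alg_aut_can (enum_aut_comp_alg_aut i) qK qK') (act_alg_aut (groupVr tS)).
move=> h b hS /=.
have ghS : (g * h * g^-1)%g \in S.
  by apply: mem_conjgV_norm hS; apply: (subsetP (normal_norm normal_of_card)).
have vhS : (v * h * v^-1)%g \in S by apply: mem_conjgV_norm.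
rewrite -actM ?groupV //.
have -> : ((g * v^-1)^-1 * (g * h * g^-1))%g = ((v * h * v^-1) * (g * v^-1)^-1)%g.
  by rewrite invMg invgK !mulgA !mulgKV.
by rewrite actM ?groupV // v_eq (conj_twisted_can (enum_aut_comp_twisted i) qK qK').
Qed.

Lemma card_Ind_aut_conditions :
  [/\ has_card_mod (S_aut S act) (fun f g => f =1 g) #|S|, S <| G &
      forall g, g \in G -> conj_iso S act g].
Proof. by split; [exact: card_S_aut | exact: normal_of_card | exact: conj_iso_of_card]. Qed.

End Counting.
End Induced.
End SAlgebra.

Theorem corollary3p2 (k : fieldType) (gT : finGroupType) (G S : {group gT})
    (B : falgType k) (act : gT -> B -> B) :
  S \subset G ->
  simple_S_Galois S act ->
  has_card_mod (Ind_aut G S act) (Ind_eqv G S act) #|G|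
  <->
  [/\ has_card_mod (S_aut S act) (fun f g => f =1 g) #|S|,
      (S <| G)%g &
      forall g, g \in G -> conj_iso S act g].
Proof.
move=> sSG [actS simpleB invS galS]; split.
  case=> F [F_aut F_inj F_surj].
  exact: (card_Ind_aut_conditions actS sSG simpleB invS galS F_aut F_inj F_surj).
case=> S_card nSG conj_isoS.
exact: (card_Ind_aut_normal actS sSG simpleB nSG conj_isoS S_card).
Qed.
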